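(* Let $(X,\wedge,\vee,\bot,\top)$ be a bounded distributive lattice, let $n\ge 1$, and let $x=(x_1,\ldots,x_n)$ be a sequence of elements of $X$ such that $x_i\le x_n$ for all $1\le i\le n-1$. For $0\le m\le n$ and $0\le k\le m+1$ define $$P_m(k)=\begin{cases}\bot & k=0,\\ \bigwedge_{I\subseteq\{1,\ldots,m\},\ |I|=k}\ \bigvee_{i\in I} x_i & 1\le k\le m,\\ \top & k=m+1.\end{cases}$$ Then $P_n(n)=x_n$, and $P_n(i)=P_{n-1}(i)$ for all $1\le i\le n-1$.
   Context: $\le$ is the partial order of the lattice $X$; $\bot$ and $\top$ are its least and greatest elements. For $1\le k\le m$, $P_m(k)$ is the $k$-th element of $(x_1,\ldots,x_m)$ sorted with respect to the lattice. *)

From HB Require Import structures.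
From mathcomp Require Import all_boot all_order.
Set Implicit Arguments. Unset Strict Implicit. Unset Printing Implicit Defensive.
Import Order.TTheory.
Local Open Scope order_scope.

(* x : nat -> L is 1-indexed: the sequence (x_1,...,x_n) is x 1, ..., x n.
   Subsets I of {1..m} are represented by sets of 'I_m, element i : 'I_m
   standing for index i+1. *)
Definition P {disp : Order.disp_t} {L : tbDistrLatticeType disp}
  (x : nat -> L) (m k : nat) : L :=
  if k == 0%N then \bot
  else if (k <= m)%N then
    \meet_(I : {set 'I_m} | #|I| == k) \join_(i in I) x i.+1
  else \top.

From HB Require Import structures.
From mathcomp Require Import all_boot all_order.
Import Order.TTheory.
Local Open Scope order_scope.

(* A k-subset of {1..m+1} either avoids m+1, and is then a k-subset of {1..m},
   or contains m+1, and then its join is x_(m+1), which dominates every join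
   of a k-subset of {1..m}.  Hence the meet defining P_(m+1)(k) equals the one
   defining P_m(k).  On the diagonal the only m-subset of {1..m} is the whole
   set, whose join is x_m when x_m is the largest element. *)

Lemma set_lift_notin {m} {i0 : 'I_m.+1} {I : {set 'I_m.+1}} :
  i0 \notin I -> I = lift i0 @: [set j | lift i0 j \in I].
Proof.
move=> i0I; apply/setP => k; case: (unliftP i0 k) => [j ->|->].
  by rewrite mem_imset ?inE //; exact: lift_inj.
rewrite (negbTE i0I); apply/esym/negbTE/imsetP => -[j _] /eqP.
by rewrite (negbTE (neq_lift _ _)).
Qed.

Section SymmetricMeetOfJoins.

Variables (disp : Order.disp_t) (L : tbDistrLatticeType disp) (x : nat -> L).

Lemma join_lift_max m (J : {set 'I_m}) :
  \join_(j in lift ord_max @: J) x j.+1 = \join_(j in J) x j.+1.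
Proof.
rewrite big_imset; last exact: in2W (@lift_inj _ ord_max).
by apply: eq_bigr => j _; rewrite lift_max.
Qed.

Lemma join_ord_dominated m :
  (forall i, (1 <= i)%N -> (i <= m)%N -> x i <= x m.+1) ->
  \join_(j < m.+1) x j.+1 = x m.+1.
Proof.
move=> dom; rewrite big_ord_recr /=; apply/join_idPr.
by apply/joinsP => j _; apply: dom.
Qed.

Lemma P_diag m : P x m m = \join_(j < m) x j.+1.
Proof.
rewrite /P leqnn; case: m => [|m] /=; first by rewrite big_ord0.
have onlyT (I : {set 'I_m.+1}) : (#|I| == m.+1) = (I == setT).
  rewrite eqEcard subsetT cardsT card_ord eqn_leq andbC.
  by rewrite (leq_trans (max_card I)) ?card_ord ?andbT.
rewrite (eq_bigl _ _ onlyT) big_pred1_eq.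
by apply: eq_bigl => j; rewrite inE.
Qed.

Lemma P_le_bound {m k} (y : L) : (0 < k <= m)%N ->
  (forall i, (1 <= i)%N -> (i <= m)%N -> x i <= y) -> P x m k <= y.
Proof.
move=> /andP[k0 km] bound; rewrite /P (negbTE (lt0n_neq0 k0)) km.
pose J := widen_ord km @: [set: 'I_k].
have cJ : #|J| == k.
  rewrite card_imset ?cardsT ?card_ord // => a b /(congr1 val) eq_ab.
  exact: val_inj.
apply: le_trans (meets_inf _ cJ) _.
by apply/joinsP => j _; apply: bound.
Qed.

Lemma P_S_le m k : (k <= m)%N -> P x m.+1 k <= P x m k.
Proof.
move=> km; rewrite /P; case: eqP => // _; rewrite km (leqW km).
apply/meetsP => J /eqP cJ; rewrite -join_lift_max.
by apply: meets_inf; rewrite card_imset ?cJ //; exact: lift_inj.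
Qed.

Lemma P_le_S m k : (0 < k <= m)%N ->
  (forall i, (1 <= i)%N -> (i <= m)%N -> x i <= x m.+1) ->
  P x m k <= P x m.+1 k.
Proof.
move=> k_range dom; have /andP[k0 km] := k_range.
rewrite {2}/P (negbTE (lt0n_neq0 k0)) (leqW km).
apply/meetsP => I /eqP cI.
have [maxI|maxI] := boolP (ord_max \in I).
  apply: le_trans (P_le_bound (x m.+1) k_range dom) _.
  exact: (@joins_sup _ _ _ _ (mem I) (fun j : 'I_m.+1 => x j.+1) maxI).
move: cI; rewrite (set_lift_notin maxI) join_lift_max card_imset => [cJ|].
  by rewrite /P (negbTE (lt0n_neq0 k0)) km; apply: meets_inf; rewrite cJ.
exact: lift_inj.
Qed.

End SymmetricMeetOfJoins.

Theorem lemma3p3 (disp : Order.disp_t) (L : tbDistrLatticeType disp)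
  (n : nat) (x : nat -> L) :
  (1 <= n)%N ->
  (forall i : nat, (1 <= i)%N -> (i <= n.-1)%N -> x i <= x n) ->
  P x n n = x n /\
  (forall i : nat, (1 <= i)%N -> (i <= n.-1)%N -> P x n i = P x n.-1 i).
Proof.
case: n => [//|m] _ /= dom; split.
  by rewrite P_diag join_ord_dominated.
move=> i i1 im; apply/le_anti.
by rewrite P_S_le // P_le_S ?i1.
Qed.
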